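(* Let $X$ be a Hausdorff topological space, $\Phi$ a local semiflow on $X$, and $\mathscr A$ an attractor of $\Phi$. Then $\mathscr A$ is stable: for any neighborhood $U$ of $\mathscr A$ there is a neighborhood $V$ of $\mathscr A$ with $\Phi(\mathbb R^+)V\subset U$.
   Context: A local semiflow $\Phi$ on $X$ is a continuous map from an open subset $\mathcal D_\Phi\subset\mathbb R^+\times X$ to $X$ such that: (i) for each $x$ there is $T_x\in(0,\infty]$ with $(t,x)\in\mathcal D_\Phi$ iff $t\in[0,T_x)$; (ii) $\Phi(0,x)=x$; (iii) if $(t+s,x)\in\mathcal D_\Phi$ with $t,s\ge0$ then $\Phi(t+s,x)=\Phi(t,\Phi(s,x))$. Write $\Phi(t)x=\Phi(t,x)$, $\Phi(J)M=\{\Phi(t)x:x\in M,\ t\in J\cap[0,T_x)\}$, $\Phi(t)M=\Phi(\{t\})M$. Convention: $U$ is a neighborhood of $A$ if $\overline A\subset\mathrm{int}\,U$. A set $K$ is invariant if $\Phi(t)K\subset K$ and $K\subset\Phi(t)K$ for all $t\ge0$. $K$ attracts $B$ if $T_x=\infty$ for all $x\in B$ and for every neighborhood $V$ of $K$ there is $t_0>0$ with $\Phi(t)B\subset V$ for all $t>t_0$. A set is s-compact if every sequence in it has a subsequence converging to a point of the set. An attractor is a nonempty s-compact invariant set $\mathscr A$ for which there is a neighborhood $N$ of $\mathscr A$ such that $\mathscr A$ attracts $N$ and every s-compact invariant subset of $N$ is contained in $\mathscr A$. *)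

From HB Require Import structures.
From mathcomp Require Import all_boot all_order all_algebra.
From mathcomp Require Import all_classical all_reals all_analysis.
Set Implicit Arguments. Unset Strict Implicit. Unset Printing Implicit Defensive.
Import Order.TTheory GRing.Theory Num.Theory numFieldNormedType.Exports.
Local Open Scope classical_set_scope.
Local Open Scope ring_scope.

Section LocalSemiflow.
Context {R : realType} {X : topologicalType}.

Definition sf_dom (Tx : X -> \bar R) : set (R * X) :=
  [set p | 0 <= p.1 /\ (p.1%:E < Tx p.2)%E].

(* A local semiflow represented by a total map Phi together with the escape
   times Tx; Phi is only relevant on sf_dom Tx. *)
Definition is_local_semiflow (Tx : X -> \bar R) (Phi : R -> X -> X) : Prop :=
  [/\ (* D_Phi is an open subset of R^+ x X (subspace topology) *)
      (exists O : set (R * X), open O /\ sf_dom Tx = O `&` [set p | 0 <= p.1]),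
      {within sf_dom Tx, continuous (fun p : R * X => Phi p.1 p.2)},
      (forall x, (0 < Tx x)%E),
      (forall x, Phi 0 x = x) &
      (forall t s x, 0 <= t -> 0 <= s -> ((t + s)%:E < Tx x)%E ->
         (t%:E < Tx (Phi s x))%E /\ Phi (t + s) x = Phi t (Phi s x))].

Definition sf_image (Tx : X -> \bar R) (Phi : R -> X -> X) (J : set R) (M : set X)
  : set X :=
  [set y | exists x t, [/\ M x, J t, 0 <= t, (t%:E < Tx x)%E & y = Phi t x]].

Definition sf_at Tx Phi (t : R) (M : set X) := sf_image Tx Phi [set t] M.

Definition nbhd_of (U A : set X) : Prop := closure A `<=` U°.

Definition sf_invariant Tx Phi (K : set X) : Prop :=
  forall t : R, 0 <= t -> sf_at Tx Phi t K `<=` K /\ K `<=` sf_at Tx Phi t K.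

Definition sf_attracts Tx Phi (K B : set X) : Prop :=
  (forall x, B x -> Tx x = +oo%E) /\
  forall V, nbhd_of V K ->
    exists t0 : R, 0 < t0 /\ forall t, t0 < t -> sf_at Tx Phi t B `<=` V.

Definition s_compact (K : set X) : Prop :=
  forall u : nat -> X, (forall n, K (u n)) ->
    exists (phi : nat -> nat) (x : X),
      {homo phi : n m / (n < m)%N} /\ K x /\ ((u \o phi) @ \oo --> x).

Definition is_attractor Tx Phi (A : set X) : Prop :=
  [/\ A !=set0, s_compact A, sf_invariant Tx Phi A &
      exists N, nbhd_of N A /\ sf_attracts Tx Phi A N /\
        forall K, K `<=` N -> s_compact K -> sf_invariant Tx Phi K -> K `<=` A].

End LocalSemiflow.

From HB Require Import structures.
From mathcomp Require Import all_boot all_order all_algebra.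
From mathcomp Require Import all_classical all_reals all_analysis.
Import Order.TTheory GRing.Theory Num.Theory numFieldNormedType.Exports.
Local Open Scope classical_set_scope.
Local Open Scope ring_scope.

(* The attracted neighbourhood N of A sends U into itself after some time t0,
   so only the compact time window [0, t0] remains.  Points of closure A have
   global forward orbits that stay in closure A, hence in int U; by joint
   continuity of the semiflow and compactness of [0, t0], all points near
   closure A keep their orbit in U up to time t0. *)

Section LocalSemiflowStability.
Context {R : realType} {X : topologicalType}.
Context {Tx : X -> \bar R} {Phi : R -> X -> X}.
Hypothesis hsf : is_local_semiflow Tx Phi.

Lemma sf_near_continuous {t : R} {x : X} {W : set X} :
  sf_dom Tx (t, x) -> nbhs (Phi t x) W ->
  \forall p \near (t, x), 0 <= p.1 -> W (Phi p.1 p.2).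
Proof.
move=> Dtx HW; case: hsf => [ [ O [oO eD] ] cont _ _ _].
have Otx : O (t, x) by move: Dtx; rewrite eD => -[].
have nO : nbhs (t, x) O by apply: open_nbhs_nbhs.
have nW : \forall p \near (t, x), sf_dom Tx p -> W (Phi p.1 p.2).
  by move/subspace_continuousP: cont => /(_ (t, x) Dtx) /(_ W HW).
near=> p => p0; have Dp : sf_dom Tx p; last exact: (near nW p) Dp.
by rewrite eD; split => //; exact: (near nO p).
Unshelve. all: by end_near. Qed.

Lemma sf_near_continuous_window (t0 : R) {x : X} {U : set X} :
  Tx x = +oo%E -> (forall t, 0 <= t -> t <= t0 -> nbhs (Phi t x) U) ->
  \forall y \near x, forall t, 0 <= t -> t <= t0 -> U (Phi t y).
Proof.
move=> Txoo nU.
have /compact_near_coveringP cK : compact `[0, t0]%classic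
  by apply: segment_compact.
have HK : \forall y \near x,
    forall t, `[0, t0]%classic t -> 0 <= t -> U (Phi t y).
  apply: (cK X (nbhs x) (fun y t => 0 <= t -> U (Phi t y))) => t.
  rewrite /= in_itv /= => /andP[t_ge0 t_le].
  have Dtx : sf_dom Tx (t, x) by split => //=; rewrite Txoo ltry.
  case: (sf_near_continuous Dtx (nU t t_ge0 t_le)) => -[P Q] /= [Pt Qx] PQ.
  by exists (P, Q) => // -[s y] /= [Ps Qy]; exact: (PQ (s, y)).
near=> y => t t_ge0 t_le; apply: (near HK y) => //.
by rewrite /= in_itv /= t_ge0 t_le.
Unshelve. all: by end_near. Qed.

Lemma sf_attracts_closure_global {A N : set X} :
  nbhd_of N A -> sf_attracts Tx Phi A N -> forall x, closure A x -> Tx x = +oo%E.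
Proof. by move=> NA [NT _] x /NA /interior_subset /NT. Qed.

Lemma closure_sf_forward_invariant {A : set X} :
  (forall x, closure A x -> Tx x = +oo%E) ->
  (forall t, 0 <= t -> sf_at Tx Phi t A `<=` A) ->
  forall t x, 0 <= t -> closure A x -> closure A (Phi t x).
Proof.
move=> Aoo Ainv t x t_ge0 Ax B nB.
have Dtx : sf_dom Tx (t, x) by split => //=; rewrite Aoo // ltry.
case: (sf_near_continuous Dtx nB) => -[P Q] /= [Pt Qx] PQ.
have [y [Ay Qy]] := Ax Q Qx.
have Tyoo : Tx y = +oo%E by apply: Aoo; apply: subset_closure.
exists (Phi t y); split; last by apply: (PQ (t, y)) => //; split => //=;
  apply: nbhs_singleton.
by apply: (Ainv t t_ge0); exists y, t; split => //; rewrite Tyoo ltry.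
Qed.

End LocalSemiflowStability.

Theorem theorem4p5 (R : realType) (X : topologicalType) (hX : hausdorff_space X)
  (Tx : X -> \bar R) (Phi : R -> X -> X) (A : set X) :
  is_local_semiflow Tx Phi -> is_attractor Tx Phi A ->
  forall U : set X, nbhd_of U A ->
    exists V : set X, nbhd_of V A /\
      sf_image Tx Phi [set t | 0 <= t] V `<=` U.
Proof.
move=> hsf [_ _ Ainv [N [NA [Natt _]]]] U UA.
have [t0 [_ Ht0]] := Natt.2 U UA.
have Aoo := sf_attracts_closure_global NA Natt.
have clA := closure_sf_forward_invariant hsf Aoo (fun t t_ge0 => (Ainv t t_ge0).1).
exists [set y | N y /\ forall t, 0 <= t -> t <= t0 -> U (Phi t y)]; split.
  move=> x Ax; have nN : nbhs x N by apply: NA.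
  have nU := sf_near_continuous_window hsf t0 (Aoo x Ax)
    (fun t t_ge0 _ => UA _ (clA t x t_ge0 Ax)).
  rewrite /interior /=; near=> y; split; first exact: (near nN y).
  exact: (near nU y).
move=> _ [y [t [[Ny Uy] /= t_ge0 _ t_lt ->]]].
case: (leP t t0) => [t_le|t_gt]; first exact: Uy.
by apply: (Ht0 t t_gt); exists y, t; split => //.
Unshelve. all: by end_near. Qed.
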